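(* For any choice of $\hat R>0$, the truncated perturbed adversary $\mathcal{A}'_\sigma$ is $R$-bounded with $R=1+\sqrt d\hat R$, and is $(r,\frac1T)$-centrally bounded for every $r\ge\sigma\sqrt{2\ln T}$.
   Context: Single parameter setting with Greedy (least squares estimate $\hat\beta^t$ at round $t$). Given an adaptive adversary that at each round picks $\mu_1^t,\dots,\mu_k^t$ with $\|\mu_i^t\|\le1$ as a function of the history, the adversary $\mathcal{A}'_\sigma$ outputs contexts $x_i^t=\mu_i^t+e_i^t$ where $e_i^t=(Q^t)^{-1}z_i^t$, $Q^t$ is an orthonormal matrix with $Q^t\hat\beta^t=(\|\hat\beta^t\|,0,\dots,0)$, and the coordinates of each $z_i^t\in\mathbb{R}^d$ are drawn independently from $\mathcal{N}(0,\sigma^2)$ conditioned on lying in $[-\hat R,\hat R]$. $R$-bounded: with probability 1, $\|x_i^t\|\le R$ for all $i,t$. $(r,\delta')$-centrally bounded: for each history, arm $i$ and fixed unit vector $w$, $w\cdot e_i^t\le r$ with probability at least $1-\delta'$. *)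

From HB Require Import structures.
From mathcomp Require Import all_boot all_order all_algebra.
From mathcomp Require Import all_classical all_reals all_analysis.
Set Implicit Arguments. Unset Strict Implicit. Unset Printing Implicit Defensive.
Import Order.TTheory GRing.Theory Num.Theory.
Import numFieldNormedType.Exports.
Local Open Scope classical_set_scope.
Local Open Scope ring_scope.

Section Defs.
Variable R : realType.

Definition enorm (d : nat) (v : 'cV[R]_d) : R :=
  Num.sqrt (\sum_(i < d) v i ord0 ^+ 2).
Definition dotv (d : nat) (v w : 'cV[R]_d) : R :=
  \sum_(i < d) v i ord0 * w i ord0.

Definition orthonormal_mx (d : nat) (Q : 'M[R]_d) : Prop := Q^T *m Q = 1%:M.

Definition first_coord_vec (d : nat) (a : R) : 'cV[R]_d :=
  \col_(i < d) (if val i == 0%N then a else 0).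

(* Density of N(0, sigma^2) conditioned on lying in [-Rh, Rh]. *)
Definition gauss_kernel (sigma x : R) : R := expR (- (x ^+ 2) / (2 * sigma ^+ 2)).
Definition tg_box (Rh : R) : set R := [set x : R | - Rh <= x <= Rh].
Definition tg_norm (sigma Rh : R) : R :=
  fine (\int[lebesgue_measure]_(x in tg_box Rh) (gauss_kernel sigma x)%:E)%E.
Definition tg_pdf (sigma Rh x : R) : R :=
  if `|x| <= Rh then gauss_kernel sigma x / tg_norm sigma Rh else 0.

(* Expectation of F(z_0, z_1, ..., z_{n-1}) for z_k i.i.d. with density
   tg_pdf, computed as an iterated Lebesgue integral (coordinate 0 outermost). *)
Fixpoint iter_tg_int (sigma Rh : R) (n : nat) (F : (nat -> R) -> \bar R) : \bar R :=
  match n with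
  | 0 => F (fun _ => 0)
  | n'.+1 =>
      (\int[lebesgue_measure]_t
         ((tg_pdf sigma Rh t)%:E *
          iter_tg_int sigma Rh n' (fun g => F (fun k => if k is k'.+1 then g k' else t))))%E
  end.

Definition tg_prob (d : nat) (sigma Rh : R) (A : set 'cV[R]_d) : \bar R :=
  iter_tg_int sigma Rh d (fun g => (\1_A (\col_(i < d) g i) : R)%:E).

End Defs.

From HB Require Import structures.
From mathcomp Require Import all_boot all_order all_algebra.
From mathcomp Require Import all_classical all_reals all_analysis.
From mathcomp Require Import ring lra.
Import Order.TTheory GRing.Theory Num.Theory.
Import numFieldNormedType.Exports.
Local Open Scope classical_set_scope.
Local Open Scope ring_scope.

(* Every coordinate of z lies in [-Rh, Rh], so |z| <= sqrt d * Rh and, Q being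
   orthogonal, |mu + Q^-1 z| <= 1 + sqrt d * Rh surely.  For the central bound,
   w . Q^-1 z = (Q w) . z with |Q w| = 1, and a truncated Gaussian coordinate is
   sigma-sub-Gaussian: completing the square in the Gaussian kernel k,
     int_[-Rh,Rh] k(x) e^(b x) = e^(b^2 sigma^2 / 2) int_[-Rh,Rh] k(x - b sigma^2),
   and a centred Gaussian density only loses mass on a symmetric interval when it
   is translated.  The Chernoff bound with lambda = r / sigma^2 then gives
   P((Q w) . z > r) <= exp (- r^2 / (2 sigma^2)) <= 1 / T. *)

Section Euclidean.
Context {R : realType} {d : nat}.
Implicit Types (u v w z : 'cV[R]_d) (Q : 'M[R]_d).

Lemma dotvE u v : dotv u v = (u^T *m v) 0 0.
Proof. by rewrite /dotv !mxE; apply: eq_bigr => i _; rewrite !mxE. Qed.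

Lemma enormE v : enorm v = Num.sqrt (dotv v v).
Proof. by rewrite /enorm /dotv; under eq_bigr do rewrite expr2. Qed.

Lemma dotv_ge0 v : 0 <= dotv v v.
Proof. by apply: sumr_ge0 => i _; rewrite -expr2 sqr_ge0. Qed.

Lemma dotvDD u v : dotv (u + v) (u + v) = dotv u u + dotv v v + 2 * dotv u v.
Proof.
rewrite /dotv mulr_sumr -!big_split /=; apply: eq_bigr => i _; rewrite mxE; ring.
Qed.

Lemma dotv_lagrange u v :
  \sum_i \sum_j (u i 0 * v j 0 - u j 0 * v i 0) ^+ 2 =
  2 * (dotv u u * dotv v v - dotv u v ^+ 2).
Proof.
have -> : \sum_i \sum_j (u i 0 * v j 0 - u j 0 * v i 0) ^+ 2 =
    dotv u u * dotv v v + dotv v v * dotv u u - 2 * (dotv u v * dotv u v).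
  rewrite /dotv !big_distrlr mulr_sumr -big_split -sumrB /=; apply: eq_bigr => i _.
  by rewrite mulr_sumr -big_split -sumrB /=; apply: eq_bigr => j _; ring.
ring.
Qed.

Lemma dotv_sqr_le u v : dotv u v ^+ 2 <= dotv u u * dotv v v.
Proof.
have : 0 <= \sum_i \sum_j (u i 0 * v j 0 - u j 0 * v i 0) ^+ 2.
  by apply: sumr_ge0 => i _; apply: sumr_ge0 => j _; exact: sqr_ge0.
by rewrite dotv_lagrange pmulr_rge0 // subr_ge0.
Qed.

Lemma enormD_le u v : enorm (u + v) <= enorm u + enorm v.
Proof.
rewrite !enormE; set a := dotv u u; set b := dotv v v.
have a0 : 0 <= a := dotv_ge0 u; have b0 : 0 <= b := dotv_ge0 v.
have uv_le : dotv u v <= Num.sqrt a * Num.sqrt b.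
  rewrite -sqrtrM // (le_trans (ler_norm _)) // -sqrtr_sqr ler_sqrt ?mulr_ge0 //.
  exact: dotv_sqr_le.
rewrite -ler_sqr ?nnegrE ?sqrtr_ge0 ?addr_ge0 ?sqrtr_ge0 //.
rewrite sqr_sqrtr ?dotv_ge0 // dotvDD sqrrD !sqr_sqrtr // -/a -/b; lra.
Qed.

Lemma orthonormal_mx_tr Q : orthonormal_mx Q -> orthonormal_mx Q^T.
Proof. by rewrite /orthonormal_mx trmxK => /mulmx1C. Qed.

Lemma invmx_orthonormal Q : orthonormal_mx Q -> invmx Q = Q^T.
Proof.
move=> QTQ; have [_ Qunit] := mulmx1_unit QTQ.
by rewrite -[invmx Q]mul1mx -QTQ -mulmxA mulmxV // mulmx1.
Qed.

Lemma enorm_orthonormal Q v : orthonormal_mx Q -> enorm (Q *m v) = enorm v.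
Proof.
by move=> QTQ; rewrite !enormE !dotvE trmx_mul -mulmxA (mulmxA Q^T) QTQ mul1mx.
Qed.

Lemma dotv_trmx_mulmx Q w z : dotv w (Q^T *m z) = dotv (Q *m w) z.
Proof. by rewrite !dotvE trmx_mul mulmxA. Qed.

Lemma enorm_le_box z (a : R) : 0 <= a ->
  (forall i, `|z i 0| <= a) -> enorm z <= Num.sqrt d%:R * a.
Proof.
move=> a0 za; rewrite /enorm -(ger0_norm a0) -sqrtr_sqr -sqrtrM ?ler0n //.
rewrite ler_sqrt ?mulr_ge0 ?ler0n ?sqr_ge0 //.
rewrite -[d in d%:R]card_ord mulr_natl -sumr_const.
by apply: ler_sum => i _; rewrite -real_normK ?num_real // lerXn2r ?nnegrE.
Qed.

End Euclidean.

Section integral_ge0_monotone.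
Local Open Scope ereal_scope.
Context {d} {T : measurableType d} {R : realType} (mu : {measure set T -> \bar R}).

Lemma ge0_le_integral_nonmeasurable (f g : T -> \bar R) :
  (forall x, 0 <= f x) -> (forall x, f x <= g x) ->
  \int[mu]_x f x <= \int[mu]_x g x.
Proof.
move=> f0 fg; have g0 x : 0 <= g x := le_trans (f0 x) (fg x).
rewrite !ge0_integralTE //; apply: ereal_sup_le => _ [h /= hf <-].
by exists h => //= x; exact: le_trans (hf x) (fg x).
Qed.

(* The integrands of [iter_tg_int] are not known to be measurable, so monotonicity
   is read off the definition of the integral as a supremum of simple integrals. *)
Lemma le_integral_nonmeasurable (f g : T -> \bar R) :
  (forall x, 0 <= g x) -> (forall x, f x <= g x) ->
  \int[mu]_x f x <= \int[mu]_x g x.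
Proof.
move=> g0 fg; rewrite integralE -[leRHS]sube0; apply: leeB.
  apply: ge0_le_integral_nonmeasurable => x; first exact: funepos_ge0.
  by rewrite funeposE ge_max fg g0.
by apply: integral_ge0 => x _; exact: funeneg_ge0.
Qed.

End integral_ge0_monotone.

Section interval_Rintegral.
Context {R : realType}.
Notation mu := (@lebesgue_measure R).
Implicit Types (G : R -> R) (a b c m : R).

Lemma continuous_integrable_itv G a b : continuous G ->
  mu.-integrable `[a, b] (EFin \o G).
Proof.
move=> cG; apply: continuous_compact_integrable; first exact: segment_compact.
exact: continuous_subspaceT.
Qed.

Lemma Rintegral_itv_split G a m b : continuous G -> a <= m -> m <= b ->
  \int[mu]_(x in `[a, b]) G x =
  \int[mu]_(x in `[a, m]) G x + \int[mu]_(x in `[m, b]) G x.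
Proof.
move=> cG am mb.
have := @Rintegral_itvB R G (BLeft a) (BRight b) m (continuous_integrable_itv _ a b cG).
rewrite !bnd_simp => /(_ am mb) split_ab.
rewrite -(@Rintegral_itv_obnd_cbnd R m (BRight b) G); last first.
  apply: integrableS (continuous_integrable_itv _ m b cG) => //.
  by apply: subset_itvr; rewrite bnd_simp.
by rewrite -split_ab addrC subrK.
Qed.

Lemma Rintegral_itv_shift G a b c a' b' : continuous G -> a <= b ->
  a' = a + c -> b' = b + c ->
  \int[mu]_(x in `[a, b]) G (x + c) = \int[mu]_(x in `[a', b']) G x.
Proof.
move=> cG ab -> ->.
have shift' : derive1 (shift c : R -> R) = cst 1.
  apply/funext => z; rewrite derive1E.
  exact: (@derive_val _ _ _ _ _ _ _ (is_derive_shift z 1 c)).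
have := @integration_by_substitution_increasing R (shift c) G _ _ ab.
rewrite /Rintegral => ->//=; last 6 first.
- by move=> x y _ _ xy; rewrite ltrD2r.
- by rewrite shift' => z _; exact: cvg_cst.
- by rewrite shift'; exact: is_cvg_cst.
- by rewrite shift'; exact: is_cvg_cst.
- split => //.
  + by apply: cvg_at_right_filter; apply: cvgD => //; exact: cvg_cst.
  + by apply: cvg_at_left_filter; apply: cvgD => //; exact: cvg_cst.
- exact: continuous_subspaceT.
by rewrite shift'; congr fine; apply: eq_integral => x _ /=; rewrite mulr1.
Qed.

Lemma Rintegral_itvN G a b : continuous G -> a <= b ->
  \int[mu]_(x in `[- b, - a]) G x = \int[mu]_(x in `[a, b]) G (- x).
Proof.
move=> cG ab; rewrite /Rintegral integration_by_substitution_oppr //.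
exact: continuous_subspaceT.
Qed.

End interval_Rintegral.

Section gauss_kernel.
Context {R : realType}.
Variable sigma : R.
Local Notation k := (gauss_kernel sigma).

Lemma gauss_kernel_gt0 x : 0 < k x.
Proof. exact: expR_gt0. Qed.

Lemma gauss_kernelN x : k (- x) = k x.
Proof. by rewrite /gauss_kernel sqrrN. Qed.

Lemma gauss_kernel_le x y : x ^+ 2 <= y ^+ 2 -> k y <= k x.
Proof.
move=> xy; rewrite /gauss_kernel ler_expR !mulNr lerN2 ler_wpM2r //.
by rewrite invr_ge0 mulr_ge0 // sqr_ge0.
Qed.

Lemma continuous_gauss_kernel : continuous k.
Proof.
move=> x; apply: continuous_comp; last exact: continuous_expR.
by apply: cvgM; [apply: cvgN; exact: (cvgM cvg_id cvg_id)|exact: cvg_cst].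
Qed.

Lemma continuous_gauss_kernel_shift c : continuous (fun x => k (x + c)).
Proof.
move=> x; apply: continuous_comp; last exact: continuous_gauss_kernel.
by apply: cvgD; [exact: cvg_id|exact: cvg_cst].
Qed.

Lemma gauss_kernel_mul_expR b x : sigma != 0 ->
  k x * expR (b * x) = expR (b ^+ 2 * sigma ^+ 2 / 2) * k (x - b * sigma ^+ 2).
Proof. by move=> s0; rewrite /gauss_kernel -!expRD; congr expR; field. Qed.

End gauss_kernel.

Section truncated_gaussian.
Context {R : realType}.
Notation mu := (@lebesgue_measure R).
Variables (sigma Rh : R).
Hypotheses (sigma_gt0 : 0 < sigma) (Rh_gt0 : 0 < Rh).
Local Notation k := (gauss_kernel sigma).
Local Notation box := (`[- Rh, Rh]%classic : set R).
Local Notation pdf := (tg_pdf sigma Rh).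

Lemma tg_normE : tg_norm sigma Rh = \int[mu]_(x in box) k x.
Proof.
by congr fine; congr integral; apply/funext => x; rewrite /tg_box /= in_itv.
Qed.

Lemma tg_norm_gt0 : 0 < tg_norm sigma Rh.
Proof.
rewrite tg_normE; apply: (@lt_le_trans _ _ (\int[mu]_(x in box) k Rh)).
  have box_len : mu box = (Rh + Rh)%:E.
    by rewrite lebesgue_measure_itv /= lte_fin gtrN // opprK.
  have : 0 < k Rh * fine (mu box).
    by rewrite box_len mulr_gt0 ?gauss_kernel_gt0 ?addr_gt0.
  by rewrite Rintegral_cst.
apply: le_Rintegral => //; do ?[apply: continuous_integrable_itv].
- exact: cst_continuous.
- exact: continuous_gauss_kernel.
move=> x; rewrite /= in_itv /= => /andP[Rhx xRh]; apply: gauss_kernel_le.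
by rewrite -real_normK ?num_real // lerXn2r ?nnegrE ?(ltW Rh_gt0) // ler_norml Rhx.
Qed.

Lemma tg_pdf_ge0 x : 0 <= pdf x.
Proof.
rewrite /tg_pdf; case: ifP => // _.
by rewrite divr_ge0 ?(ltW (gauss_kernel_gt0 _ _)) ?(ltW tg_norm_gt0).
Qed.

Lemma integral_tg_pdf_mul (h : R -> R) : continuous h ->
  (\int[mu]_x (pdf x * h x)%:E =
   ((\int[mu]_(x in box) (k x * h x)) / tg_norm sigma Rh)%:E)%E.
Proof.
move=> ch; have ckh : continuous (fun x => k x * h x).
  by move=> x; apply: cvgM; [exact: continuous_gauss_kernel|exact: ch].
rewrite -RintegralZr ?continuous_integrable_itv // /Rintegral fineK; last first.
  apply: integrable_fin_num => //; apply: continuous_integrable_itv => x.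
  by apply: cvgM; [exact: ckh|exact: cvg_cst].
rewrite integral_mkcond; apply: eq_integral => x _.
rewrite /patch /tg_pdf mem_setE /= in_itv /= -ler_norml.
by case: ifPn => _; [rewrite mulrAC|rewrite mul0r].
Qed.

Lemma integral_tg_pdf : (\int[mu]_x (pdf x)%:E = 1)%E.
Proof.
under eq_integral do rewrite -[pdf _]mulr1.
rewrite integral_tg_pdf_mul; last exact: cst_continuous.
under eq_Rintegral do rewrite mulr1.
by rewrite -tg_normE divff // gt_eqF // tg_norm_gt0.
Qed.

Lemma iter_tg_int_ge0 n (F : (nat -> R) -> \bar R) : (forall g, 0 <= F g)%E ->
  (0 <= iter_tg_int sigma Rh n F)%E.
Proof.
elim: n F => [|n IHn] F F0 /=; first exact: F0.
apply: integral_ge0 => t _; apply: mule_ge0; first by rewrite lee_fin tg_pdf_ge0.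
exact: IHn.
Qed.

Lemma iter_tg_int_eq1 n (F : (nat -> R) -> \bar R) :
  (forall g, (forall i, (i < n)%N -> `|g i| <= Rh) -> F g = 1%E) ->
  iter_tg_int sigma Rh n F = 1%E.
Proof.
elim: n F => [|n IHn] F F1 /=; first exact: F1.
rewrite -integral_tg_pdf; apply: eq_integral => t _.
have [t_le|t_gt] := boolP (`|t| <= Rh); last by rewrite /tg_pdf (negbTE t_gt) mul0e.
by rewrite IHn ?mule1 // => g g_le; apply: F1 => -[|i] //=; exact: g_le.
Qed.

Lemma Rintegral_gauss_shift_le_ge0 m : 0 <= m ->
  \int[mu]_(x in box) k (x - m) <= \int[mu]_(x in box) k x.
Proof.
move=> m0; have ck := continuous_gauss_kernel sigma.
have ck_m := continuous_gauss_kernel_shift sigma (- m).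
have [m_le|m_gt] := leP m (Rh + Rh); last first.
  apply: le_Rintegral; rewrite ?continuous_integrable_itv //.
  move=> x; rewrite /= in_itv /= => /andP[Rhx xRh]; apply: gauss_kernel_le; nra.
have Rh_ge0 := ltW Rh_gt0.
(* Translated back, the left side is the mass of k on [-Rh - m, Rh - m].  Both
   sides share [-Rh, Rh - m]; what remains on the left, [-Rh - m, -Rh], is the
   translate by -2Rh of what remains on the right, [Rh - m, Rh], and lies
   farther from 0. *)
rewrite (Rintegral_itv_shift k (- Rh) Rh (- m) (- Rh - m) (Rh - m) ck) //; last by lra.
rewrite (Rintegral_itv_split k (- Rh - m) (- Rh) (Rh - m) ck); [|lra|lra].
rewrite [leRHS](Rintegral_itv_split k (- Rh) (Rh - m) Rh ck); [|lra|lra].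
rewrite addrC lerD2l.
rewrite -(Rintegral_itv_shift k (Rh - m) Rh (- (Rh + Rh)) (- Rh - m) (- Rh) ck);
  [|lra|lra|lra].
apply: le_Rintegral; rewrite ?continuous_integrable_itv //.
  exact: continuous_gauss_kernel_shift.
move=> x; rewrite /= in_itv /= => /andP[mx xRh]; apply: gauss_kernel_le; nra.
Qed.

Lemma Rintegral_gauss_shift_le m :
  \int[mu]_(x in box) k (x - m) <= \int[mu]_(x in box) k x.
Proof.
have [m0|m0] := leP 0 m; first exact: Rintegral_gauss_shift_le_ge0.
have ck_m := continuous_gauss_kernel_shift sigma (- m).
have Rh_le : - Rh <= Rh by have := ltW Rh_gt0; lra.
have := Rintegral_itvN _ (- Rh) Rh ck_m Rh_le; rewrite opprK => ->.
under eq_Rintegral => x _ do rewrite -opprD gauss_kernelN.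
by have := Rintegral_gauss_shift_le_ge0 (- m); rewrite opprK oppr_ge0 (ltW m0); apply.
Qed.

Lemma Rintegral_gauss_expR_le b :
  \int[mu]_(x in box) (k x * expR (b * x)) <=
  expR (b ^+ 2 * sigma ^+ 2 / 2) * \int[mu]_(x in box) k x.
Proof.
under eq_Rintegral do rewrite gauss_kernel_mul_expR ?gt_eqF //.
rewrite RintegralZl ?ler_pM2l ?expR_gt0 ?Rintegral_gauss_shift_le //.
exact/continuous_integrable_itv/continuous_gauss_kernel_shift.
Qed.

Lemma integral_tg_pdf_one_sub_expR (A b : R) : 0 <= A ->
  ((1 - A * expR (b ^+ 2 * sigma ^+ 2 / 2))%:E <=
   \int[mu]_t (pdf t * (1 - A * expR (b * t)))%:E)%E.
Proof.
move=> A0; have ce : continuous (fun t => expR (b * t)).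
  move=> t; apply: continuous_comp; last exact: continuous_expR.
  by apply: cvgM; [exact: cvg_cst|exact: cvg_id].
have cke : continuous (fun t => k t * expR (b * t)).
  by move=> t; apply: cvgM; [exact: continuous_gauss_kernel|exact: ce].
rewrite integral_tg_pdf_mul; last first.
  by move=> t; apply: cvgB; [exact: cvg_cst|apply: cvgM; [exact: cvg_cst|exact: ce]].
under eq_Rintegral do rewrite mulrBr mulr1 mulrCA.
rewrite lee_fin RintegralB; last 3 first.
- by [].
- exact/continuous_integrable_itv/continuous_gauss_kernel.
- apply: continuous_integrable_itv => t.
  by apply: cvgM; [exact: cvg_cst|exact: cke].
rewrite RintegralZl ?continuous_integrable_itv // -tg_normE.
rewrite ler_pdivlMr ?tg_norm_gt0 // mulrBl mul1r -(mulrA A) lerD2l lerN2.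
by rewrite ler_wpM2l // tg_normE Rintegral_gauss_expR_le.
Qed.

Lemma iter_tg_int_chernoff (lam r : R) n (v : nat -> R) (c : R)
    (F : (nat -> R) -> \bar R) : 0 <= lam ->
  (forall g, 0 <= F g)%E ->
  (forall g : nat -> R, c + \sum_(i < n) v i * g i <= r -> F g = 1%E) ->
  ((1 - expR (lam * (c - r) + lam ^+ 2 * sigma ^+ 2 / 2 * \sum_(i < n) v i ^+ 2))%:E
   <= iter_tg_int sigma Rh n F)%E.
Proof.
move=> lam0; elim: n v c F => [|n IHn] v c F F0 F1 /=.
  rewrite big_ord0 mulr0 addr0; have [cr|rc] := leP c r.
    by rewrite F1 ?big_ord0 ?addr0 // lee_fin gerBl expR_ge0.
  apply: le_trans (F0 _); rewrite lee_fin subr_le0 -expR0 ler_expR.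
  by rewrite mulr_ge0 // subr_ge0 ltW.
set S := \sum_(i < n) v i.+1 ^+ 2.
set A := expR (lam * (c - r) + lam ^+ 2 * sigma ^+ 2 / 2 * S).
have -> : expR (lam * (c - r) + lam ^+ 2 * sigma ^+ 2 / 2 * \sum_(i < n.+1) v i ^+ 2)
    = A * expR ((lam * v 0%N) ^+ 2 * sigma ^+ 2 / 2).
  by rewrite big_ord_recl /A /S -expRD; congr expR; ring.
apply: le_trans (integral_tg_pdf_one_sub_expR A (lam * v 0%N) (expR_ge0 _)) _.
apply: le_integral_nonmeasurable => t.
  by rewrite mule_ge0 ?lee_fin ?tg_pdf_ge0 ?iter_tg_int_ge0.
rewrite EFinM lee_wpmul2l ?lee_fin ?tg_pdf_ge0 //.
have -> : 1 - A * expR (lam * v 0%N * t) =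
    1 - expR (lam * (c + v 0%N * t - r) + lam ^+ 2 * sigma ^+ 2 / 2 * S).
  by rewrite /A -expRD; congr (1 - expR _); ring.
apply: (IHn (fun i => v i.+1) (c + v 0%N * t)) => [g|g g_le]; first exact: F0.
by apply: F1; rewrite big_ord_recl /= addrA.
Qed.

Lemma tg_prob_eq1 d (A : set 'cV[R]_d) :
  (forall z : 'cV_d, (forall i, `|z i 0| <= Rh) -> A z) -> tg_prob sigma Rh A = 1%E.
Proof.
move=> boxA; apply: iter_tg_int_eq1 => g g_le; rewrite indicE mem_set //.
by apply: boxA => i; rewrite mxE; exact: g_le.
Qed.

Lemma tg_prob_dotv_le d (v : 'cV[R]_d) (r : R) : enorm v = 1 -> 0 <= r ->
  ((1 - expR (- (r ^+ 2 / (2 * sigma ^+ 2))))%:E <=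
   tg_prob sigma Rh [set z | (dotv v z <= r)%R])%E.
Proof.
move=> v1 r0; pose u i := if insub i is Some j then v j 0 else 0.
have uE (i : 'I_d) : u i = v i 0 by rewrite /u valK.
have u_sum : \sum_(i < d) u i ^+ 2 = 1.
  rewrite -(expr1n _ 2) -v1 sqr_sqrtr ?sumr_ge0 // => [|i _]; last exact: sqr_ge0.
  by apply: eq_bigr => i _; rewrite uE.
apply: le_trans (iter_tg_int_chernoff (r / sigma ^+ 2) r d u 0 _ _ _ _) => //.
- have s0 : sigma != 0 by rewrite gt_eqF.
  rewrite u_sum mulr1 (_ : _ * (0 - r) + _ = - (r ^+ 2 / (2 * sigma ^+ 2))) //.
  by field.
- by rewrite divr_ge0 ?sqr_ge0.
- move=> g; rewrite add0r => u_le; rewrite indicE mem_set //= /dotv.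
  by under eq_bigr do rewrite mxE -uE.
Qed.

End truncated_gaussian.

Lemma expR_gauss_tail_le_inv {R : realType} (sigma r : R) (T : nat) :
  0 < sigma -> (0 < T)%N -> sigma * Num.sqrt (2 * ln T%:R) <= r ->
  expR (- (r ^+ 2 / (2 * sigma ^+ 2))) <= T%:R^-1.
Proof.
move=> s0 T0 r_ge; have T_gt0 : 0 < T%:R :> R by rewrite ltr0n.
have lnT0 : 0 <= ln (T%:R : R) by rewrite ln_ge0 // ler1n.
have bound0 : 0 <= sigma * Num.sqrt (2 * ln T%:R) by rewrite mulr_ge0 ?sqrtr_ge0 ?ltW.
rewrite -[T%:R^-1]lnK ?posrE ?invr_gt0 // lnV ?posrE // ler_expR lerN2.
rewrite ler_pdivlMr ?mulr_gt0 ?exprn_gt0 //.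
have : (sigma * Num.sqrt (2 * ln T%:R)) ^+ 2 <= r ^+ 2.
  by rewrite ler_pXn2r ?nnegrE // (le_trans bound0).
rewrite exprMn sqr_sqrtr ?mulr_ge0 //; nra.
Qed.

Theorem lemma6 (R : realType) (d : nat) (sigma Rh : R) (T : nat) :
  0 < sigma -> 0 < Rh -> (0 < T)%N ->
  (* R-bounded with R = 1 + sqrt d * Rh *)
  (forall (bhat : 'cV[R]_d) (Q : 'M[R]_d) (mu : 'cV[R]_d),
      orthonormal_mx Q -> Q *m bhat = first_coord_vec d (enorm bhat) ->
      enorm mu <= 1 ->
      tg_prob sigma Rh
        [set z | enorm (mu + invmx Q *m z) <= 1 + Num.sqrt (d%:R) * Rh] = 1%E)
  /\
  (* (r, 1/T)-centrally bounded for every r >= sigma sqrt(2 ln T) *)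
  (forall r : R, sigma * Num.sqrt (2 * ln (T%:R)) <= r ->
   forall (bhat : 'cV[R]_d) (Q : 'M[R]_d),
      orthonormal_mx Q -> Q *m bhat = first_coord_vec d (enorm bhat) ->
   forall w : 'cV[R]_d, enorm w = 1 ->
      ((1 - T%:R^-1)%:E <= tg_prob sigma Rh [set z | (dotv w (invmx Q *m z) <= r)%R])%E).
Proof.
move=> s0 Rh0 T0; split.
  move=> _ Q mu Q_orth _ mu_le; apply: tg_prob_eq1 => // z z_box.
  rewrite /= invmx_orthonormal // (le_trans (enormD_le _ _)) // lerD //.
  rewrite enorm_orthonormal; last exact: orthonormal_mx_tr.
  exact: enorm_le_box (ltW Rh0) z_box.
move=> r r_ge _ Q Q_orth _ w w1.
have r0 : 0 <= r := le_trans (mulr_ge0 (ltW s0) (sqrtr_ge0 _)) r_ge.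
have -> : [set z | dotv w (invmx Q *m z) <= r] = [set z | dotv (Q *m w) z <= r].
  by apply/funext => z; rewrite /= invmx_orthonormal // dotv_trmx_mulmx.
apply: le_trans (tg_prob_dotv_le _ _ s0 Rh0 _ (Q *m w) r _ r0).
  by rewrite lee_fin lerD2l lerN2 expR_gauss_tail_le_inv.
by rewrite enorm_orthonormal.
Qed.
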